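(* The exponential generating function $g(x,y)=g(x,y;p,q,r)=\sum_{n\ge1}b_n(y;p,q,r)\frac{x^n}{n!}$ satisfies $$\frac{\partial}{\partial x}g(x,y)=y+\left(p+\frac{yr-q}{1-y}\right)g(x,y)+\frac{y}{1-y}\bigl(q\,g(x,1)-yr\,g(xy,1)\bigr).$$
   Context: An inversion sequence of length $n$ is a sequence $\rho=\rho_1\cdots\rho_n$ of integers with $1\le \rho_i\le i$ for all $i$; $I_{n,i}$ is the set of those of length $n$ with last letter $i$. A level, descent, or ascent of $\rho$ is an index $i\in[n-1]$ with $\rho_i=\rho_{i+1}$, $\rho_i>\rho_{i+1}$, or $\rho_i<\rho_{i+1}$, respectively. Let $b_{n,i}(p,q,r)=\sum_{\rho\in I_{n,i}}p^{\mathrm{lev}(\rho)}q^{\mathrm{des}(\rho)}r^{\mathrm{asc}(\rho)}$ (numbers of levels, descents, ascents) and $b_n(y;p,q,r)=\sum_{i=1}^n b_{n,i}(p,q,r)y^i$. *)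

From HB Require Import structures.
From mathcomp Require Import all_boot all_order all_algebra.
Set Implicit Arguments. Unset Strict Implicit. Unset Printing Implicit Defensive.
Import Order.TTheory GRing.Theory Num.Theory.

(* Inversion sequences are represented as [seq nat], with the paper's
   1-based letters: rho = [:: rho_1; ...; rho_n], and position i (1-based)
   is entry [nth 0 s (i-1)]. *)
Definition is_invseq (s : seq nat) : bool :=
  all (fun i => 0 < nth 0 s i <= i.+1) (iota 0 (size s)).

(* levels / descents / ascents: indices i in [n-1] (here 0-based: 0..n-2) *)
Definition lev (s : seq nat) : nat :=
  count (fun i => nth 0 s i == nth 0 s i.+1) (iota 0 (size s).-1).
Definition des (s : seq nat) : nat :=
  count (fun i => nth 0 s i.+1 < nth 0 s i) (iota 0 (size s).-1).
Definition asc (s : seq nat) : nat :=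
  count (fun i => nth 0 s i < nth 0 s i.+1) (iota 0 (size s).-1).

(* the word of a finite function 'I_n -> 'I_n.+1 (every inversion sequence of
   length n arises exactly once this way) *)
Definition word (n : nat) (t : {ffun 'I_n -> 'I_n.+1}) : seq nat :=
  [seq val (t j) | j <- enum 'I_n].

Local Open Scope ring_scope.

Definition bni (R : comRingType) (n i : nat) (p q r : R) : R :=
  \sum_(t : {ffun 'I_n -> 'I_n.+1} |
          is_invseq (word t) && (last 0%N (word t) == i))
     p ^+ lev (word t) * q ^+ des (word t) * r ^+ asc (word t).

Definition bn (R : comRingType) (n : nat) (y p q r : R) : R :=
  \sum_(1 <= i < n.+1) bni n i p q r * y ^+ i.

(* Formal power series in x over R, given by their (ordinary) coefficients. *)
Definition fps (R : Type) := nat -> R.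

Definition fderiv (R : nzRingType) (f : fps R) : fps R :=
  fun n => f n.+1 * n.+1%:R.
(* substitution x |-> c x *)
Definition fdil (R : nzRingType) (c : R) (f : fps R) : fps R :=
  fun n => c ^+ n * f n.
Definition fconst (R : nzRingType) (c : R) : fps R :=
  fun n => if n is 0%N then c else 0.

Definition egf (R : fieldType) (y p q r : R) : fps R :=
  fun n => if n is 0%N then 0 else bn n y p q r / (n`!)%:R.

From HB Require Import structures.
From mathcomp Require Import all_boot all_order all_algebra ring.
From Stdlib Require Import FunctionalExtensionality.
Import Order.TTheory GRing.Theory Num.Theory.

Set Implicit Arguments.
Unset Strict Implicit.
Unset Printing Implicit Defensive.

(* Every inversion sequence of length n+1 is uniquely an inversion sequence
   rho of length n followed by a letter k in [1, n+1], and appending k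
   multiplies the weight by p, q or r according as k equals, is below or is
   above the last letter i of rho.  Summing y^k over k is then a geometric
   sum, which gives
     (1 - y) b_{n+1}(y) = (p (1 - y) + y r - q) b_n(y) + y q b_n(1)
                          - r y^{n+2} b_n(1),
   and this recurrence is the coefficientwise form of the differential
   equation. *)

Fixpoint invseqs (n : nat) : seq (seq nat) :=
  if n is m.+1 then [seq rcons s k | s <- invseqs m, k <- iota 1 m.+1]
  else [:: [::]].

Lemma iota_rcons m n : iota m n.+1 = rcons (iota m n) (m + n).
Proof. by rewrite -addn1 iotaD cats1. Qed.

Lemma is_invseq_rcons s k :
  is_invseq (rcons s k) = is_invseq s && (0 < k <= (size s).+1).
Proof.
rewrite /is_invseq size_rcons iota_rcons all_rcons /= nth_rcons.
rewrite ltnn eqxx andbC; congr andb.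
apply: eq_in_all => i; rewrite mem_iota add0n /= => lt_is.
by rewrite nth_rcons lt_is.
Qed.

Lemma mem_invseqs n s : (s \in invseqs n) = (size s == n) && is_invseq s.
Proof.
elim: n s => [|n IHn] s; first by case: s.
case/lastP: s => [|s k].
  by apply/negbTE/allpairsP => -[[s k] /= [_ _]]; case: s.
rewrite size_rcons eqSS is_invseq_rcons.
apply/allpairsP/idP => [[[s' k'] [s'_in k'_in /rcons_inj [-> ->]]]|].
  have : s' \in invseqs n := s'_in; rewrite IHn => /andP[/eqP -> ->].
  by have : k' \in iota 1 n.+1 := k'_in; rewrite mem_iota add1n ltnS eqxx.
case/andP=> /eqP size_s /andP[s_inv k_range]; exists (s, k); split=> //.
  by rewrite -[_ \in _]/(s \in invseqs n) IHn size_s eqxx.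
by rewrite -[_ \in _]/(k \in iota 1 n.+1) mem_iota add1n ltnS -size_s.
Qed.

Lemma uniq_invseqs n : uniq (invseqs n).
Proof.
elim: n => [|n IHn] //.
apply: allpairs_uniq => //; first exact: iota_uniq.
by move=> [s k] [s' k'] _ _ /= /rcons_inj.
Qed.

Lemma last_invseqs n s : 0 < n -> s \in invseqs n -> 0 < last 0 s <= n.
Proof.
move=> n_gt0; rewrite mem_invseqs => /andP[/eqP size_s /allP s_inv].
rewrite -nth_last size_s -{3}(prednK n_gt0).
by apply: s_inv; rewrite mem_iota size_s /= ltn_predL.
Qed.

Section Words.

Variable n : nat.
Implicit Type t : {ffun 'I_n -> 'I_n.+1}.

Lemma size_word t : size (word t) = n.
Proof. by rewrite size_map size_enum_ord. Qed.

Lemma nth_word t (j : 'I_n) : nth 0 (word t) j = t j.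
Proof. by rewrite (nth_map j) ?size_enum_ord // nth_ord_enum. Qed.

Lemma word_inj : injective (@word n).
Proof.
move=> t1 t2 eq_t; apply/ffunP => j; apply: val_inj.
by rewrite /= -!nth_word eq_t.
Qed.

Lemma perm_invseq_words :
  perm_eq [seq s <- map (@word n) (index_enum {ffun 'I_n -> 'I_n.+1})
             | is_invseq s]
          (invseqs n).
Proof.
apply: uniq_perm; last move=> s; rewrite ?uniq_invseqs //.
  by rewrite filter_uniq // map_inj_uniq ?index_enum_uniq //; apply: word_inj.
rewrite mem_filter mem_invseqs [RHS]andbC; case s_inv: (is_invseq s) => //=.
apply/mapP/eqP => [[t _ ->]|size_s]; first exact: size_word.
have s_range (j : 'I_n) : nth 0 s j < n.+1.
  have /andP[_ le_sj] : 0 < nth 0 s j <= j.+1.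
    by apply: (allP s_inv); rewrite mem_iota size_s /=.
  by rewrite ltnS (leq_trans le_sj).
exists [ffun j => Ordinal (s_range j)]; first by rewrite mem_index_enum.
apply: (@eq_from_nth _ 0); rewrite ?size_word // => j lt_jn.
by rewrite size_s in lt_jn; rewrite (nth_word _ (Ordinal lt_jn)) ffunE.
Qed.

End Words.

Lemma count_adjacent_rcons (T : Type) (x0 : T) (e : T -> T -> bool) s k :
  0 < size s ->
  count (fun i => e (nth x0 (rcons s k) i) (nth x0 (rcons s k) i.+1))
        (iota 0 (size (rcons s k)).-1) =
  count (fun i => e (nth x0 s i) (nth x0 s i.+1)) (iota 0 (size s).-1)
  + e (last x0 s) k.
Proof.
case/lastP: s => [|s a] // _.
rewrite !size_rcons iota_rcons -[rcons (iota _ _) _]cats1 count_cat /=.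
rewrite add0n addn0 !nth_rcons !size_rcons !ltnn !ltnSn !eqxx last_rcons.
congr addn.
apply: eq_in_count => i; rewrite mem_iota add0n => /= lt_is.
by rewrite !nth_rcons !size_rcons !ltnS lt_is (ltnW lt_is).
Qed.

Local Open Scope ring_scope.

Section Recurrence.

Variables (R : comNzRingType) (p q r : R).

Definition invseq_weight (s : seq nat) : R :=
  p ^+ lev s * q ^+ des s * r ^+ asc s.

Definition step_weight (i k : nat) : R :=
  p ^+ (i == k) * q ^+ (k < i)%N * r ^+ (i < k)%N.

Lemma invseq_weight_rcons s k : (0 < size s)%N ->
  invseq_weight (rcons s k) = invseq_weight s * step_weight (last 0%N s) k.
Proof.
move=> s_gt0; rewrite /invseq_weight /lev /des /asc.
rewrite (@count_adjacent_rcons nat 0%N (fun a b => a == b)) //.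
rewrite (@count_adjacent_rcons nat 0%N (fun a b => b < a)%N) //.
rewrite (@count_adjacent_rcons nat 0%N (fun a b => a < b)%N) //.
by rewrite !exprD /step_weight; ring.
Qed.

Lemma bni_invseqs n i :
  bni n i p q r = \sum_(s <- invseqs n | last 0%N s == i) invseq_weight s.
Proof.
pose P s := is_invseq s && (last 0%N s == i).
rewrite /bni -(big_map (@word n) P invseq_weight).
by rewrite -big_filter_cond (perm_big _ (perm_invseq_words n)).
Qed.

Lemma bn_invseqs n x : (0 < n)%N ->
  bn n x p q r = \sum_(s <- invseqs n) invseq_weight s * x ^+ last 0%N s.
Proof.
move=> n_gt0; rewrite /bn.
under eq_bigr do rewrite bni_invseqs big_distrl big_mkcond.
rewrite exchange_big /=; apply: eq_big_seq => s s_in.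
have /andP[last_gt0 last_le] := last_invseqs n_gt0 s_in.
rewrite -big_mkcond /=; under eq_bigl do rewrite eq_sym.
by rewrite big_nat1_eq ltnS last_gt0 last_le.
Qed.

Lemma step_weight_sum y i m : (0 < i)%N ->
  (1 - y) * \sum_(1 <= k < m.+1) step_weight i k * y ^+ k =
  if (m < i)%N then q * (y - y ^+ m.+1)
  else (p * (1 - y) + y * r - q) * y ^+ i + y * q - r * y ^+ m.+1.
Proof.
move=> i_gt0; elim: m => [|m IHm].
  by rewrite big_geq // i_gt0 expr1 subrr !mulr0.
rewrite big_nat_recr //= mulrDr IHm /step_weight.
by case: (ltngtP m.+1 i) => [_|_|<-] /=;
  rewrite !expr0 !expr1 !exprS; ring.
Qed.

Lemma bnS y n : (0 < n)%N ->
  (1 - y) * bn n.+1 y p q r =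
  (p * (1 - y) + y * r - q) * bn n y p q r + y * q * bn n 1 p q r
  - r * y ^+ n.+2 * bn n 1 p q r.
Proof.
move=> n_gt0; rewrite !bn_invseqs //.
change (invseqs n.+1) with [seq rcons s k | s <- invseqs n, k <- iota 1 n.+1].
rewrite big_allpairs_dep !mulr_sumr -big_split -sumrB.
apply: eq_big_seq => s s_in.
have /andP[last_gt0 last_le] := last_invseqs n_gt0 s_in.
have s_gt0 : (0 < size s)%N.
  by move: s_in; rewrite mem_invseqs => /andP[/eqP ->].
under eq_bigr do rewrite last_rcons invseq_weight_rcons // -mulrA.
have := step_weight_sum y n.+1 last_gt0.
rewrite ltnNge (leqW last_le) /index_iota subn1 /= => sum_steps.
by rewrite -mulr_sumr expr1n mulr1 mulrCA sum_steps; ring.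
Qed.

End Recurrence.

Lemma bn1 (R : comNzRingType) (y p q r : R) : bn 1 y p q r = y.
Proof.
rewrite bn_invseqs //= big_seq1 /invseq_weight /lev /des /asc /=.
by rewrite !mulr1 mul1r.
Qed.

Lemma fderiv_egf (R : numFieldType) (y p q r : R) n :
  fderiv (egf y p q r) n = bn n.+1 y p q r / n`!%:R.
Proof.
have fact_neq0 : n`!%:R != 0 :> R by rewrite pnatr_eq0 -lt0n fact_gt0.
by rewrite /fderiv /egf factS natrM; field; rewrite fact_neq0 -mulrS pnatr_eq0.
Qed.

Theorem theorem3p3 (R : numFieldType) (p q r y : R) (hy : y != 1) :
  fderiv (egf y p q r) =
  (fun n : nat =>
     fconst y n
     + (p + (y * r - q) / (1 - y)) * egf y p q r n
     + y / (1 - y) * (q * egf 1 p q r n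
                      - y * r * fdil y (egf 1 p q r) n)).
Proof.
have y1_neq0 : 1 - y != 0 by rewrite subr_eq0 eq_sym.
apply: functional_extensionality => -[|n].
  by rewrite fderiv_egf bn1 fact0 divr1 /fconst /egf /fdil; ring.
have fact_neq0 : n.+1`!%:R != 0 :> R by rewrite pnatr_eq0 -lt0n fact_gt0.
rewrite fderiv_egf -[bn n.+2 _ _ _ _](mulKf y1_neq0) bnS //.
by rewrite /fconst /egf /fdil !exprS; field; rewrite fact_neq0.
Qed.
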